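(* Let $A=(\Sigma, Q, Q_0, \delta, F)$ be an $n$-state NFA that remembers the last symbol. For each symbol $a \in \Sigma$, let $Q_a=\bigcup_{q\in Q}\delta(q,a) \subseteq Q$ be the set of states reachable by a transition by $a$, and let $n_1 = \max_{a \in \Sigma} |Q_a|$. Then there exists a DFA with at most $\max(2^{\frac{n}{2}+1}, 2^{n_1+1})$ states that recognizes $L(A)$.
   Context: An NFA is a quintuple $(\Sigma,Q,Q_0,\delta,F)$ with finite alphabet $\Sigma$, finite state set $Q$, set of initial states $Q_0\subseteq Q$, transition function $\delta\colon Q\times\Sigma\to 2^Q$ and accepting states $F\subseteq Q$; $L(A)$ is the set of strings having an accepting computation. A DFA is an NFA with one initial state and exactly one transition from each state by each symbol. An NFA remembers the last symbol if its state set is a disjoint union of subsets $P_a$ ($a\in\Sigma$) with $\delta(q,a)\subseteq P_a$ for all $q\in Q$, $a\in\Sigma$. *)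

From mathcomp Require Import all_boot.
Set Implicit Arguments. Unset Strict Implicit. Unset Printing Implicit Defensive.

Record nfa (Sigma Q : finType) := NFA {
  nfa_init  : {set Q};
  nfa_delta : Q -> Sigma -> {set Q};
  nfa_final : {set Q} }.

Fixpoint nfa_run (Sigma Q : finType) (A : nfa Sigma Q) (p : Q)
    (w : seq Sigma) (qs : seq Q) : bool :=
  match w, qs with
  | [::], [::] => true
  | a :: w', q :: qs' => (q \in nfa_delta A p a) && nfa_run A q w' qs'
  | _, _ => false
  end.

Definition nfa_accepts (Sigma Q : finType) (A : nfa Sigma Q) (w : seq Sigma) : Prop :=
  exists q0, exists qs, [/\ q0 \in nfa_init A, nfa_run A q0 w qs &
                           last q0 qs \in nfa_final A].

Definition remembers_last_symbol (Sigma Q : finType) (A : nfa Sigma Q) : Prop :=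
  exists P : Sigma -> {set Q},
    [/\ (forall a b, a != b -> [disjoint P a & P b]),
        \bigcup_(a : Sigma) P a = [set: Q] &
        forall q a, nfa_delta A q a \subset P a].

Definition reach_by (Sigma Q : finType) (A : nfa Sigma Q) (a : Sigma) : {set Q} :=
  \bigcup_(q : Q) nfa_delta A q a.

Record dfa (Sigma : finType) (m : nat) := DFA {
  dfa_start : 'I_m;
  dfa_step  : 'I_m -> Sigma -> 'I_m;
  dfa_final : {set 'I_m} }.

Definition dfa_accepts (Sigma : finType) (m : nat) (D : dfa Sigma m) (w : seq Sigma) : Prop :=
  foldl (dfa_step D) (dfa_start D) w \in dfa_final D.

From mathcomp Require Import all_boot zify.
Set Implicit Arguments.
Unset Strict Implicit.
Unset Printing Implicit Defensive.

(* Determinize by the subset construction.  After a nonempty word ending with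
   a, the current subset lies inside Q_a, so besides the initial set only
   subsets of the Q_a are visited: at most 2 + sum_a (2^k_a - 1) states, where
   k_a = |Q_a|.  Since Q_a lies in the block P_a, sum_a k_a <= n, and
   k_a <= n1.  As (2^k - 1)/k is nondecreasing in k, the sum is at most
   n (2^c - 1)/c for every c >= n1; c = n1 when n <= 2 n1 and c = n/2
   (rounded down) otherwise yield the two bounds. *)

Lemma pred_exp2_ratio_mono k c : k <= c -> c * (2 ^ k - 1) <= k * (2 ^ c - 1).
Proof.
elim: c => [|c IHc]; first by rewrite leqn0 => /eqP->.
rewrite leq_eqVlt => /orP[/eqP->|]; first by rewrite mulnC.
rewrite ltnS => le_kc; have := IHc le_kc; have : 0 < 2 ^ c by rewrite expn_gt0.
have : 2 ^ k <= 2 ^ c by rewrite leq_exp2l.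
rewrite expnS; case: k {IHc} le_kc => [|k] le_kc; first by rewrite subnn !muln0.
nia.
Qed.

Lemma sum_pred_exp2_le (I : finType) (k : I -> nat) n c :
  \sum_i k i <= n -> (forall i, k i <= c) ->
  c * \sum_i (2 ^ k i - 1) <= n * (2 ^ c - 1).
Proof.
move=> sum_le k_le; rewrite big_distrr /=.
apply: (@leq_trans (\sum_i k i * (2 ^ c - 1))).
  by apply: leq_sum => i _; apply: pred_exp2_ratio_mono.
by rewrite -big_distrl leq_mul2r sum_le orbT.
Qed.

Lemma pred_exp2_bound_even c n S :
  0 < c -> n <= c.*2 -> c * S <= n * (2 ^ c - 1) -> S + 2 <= 2 ^ c.+1.
Proof.
move=> c_gt0 le_n_2c le_cS; have : 0 < 2 ^ c by rewrite expn_gt0.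
have : c * S <= c * (2 * (2 ^ c - 1)).
  rewrite mulnA [c * 2]mulnC mul2n (leq_trans le_cS) //.
  by rewrite leq_mul2r le_n_2c orbT.
by rewrite leq_pmul2l // expnS; lia.
Qed.

Lemma pred_exp2_bound_odd c S :
  0 < c -> c * S <= c.*2.+1 * (2 ^ c - 1) -> (S + 2) ^ 2 <= 2 ^ (c.*2.+1 + 2).
Proof.
move=> c_gt0 le_cS.
have -> : 2 ^ (c.*2.+1 + 2) = 8 * (2 ^ c) ^ 2.
  by rewrite addSn addn2 -addn3 expnD -muln2 expnM mulnC.
have : 2 <= 2 ^ c by rewrite -{1}(expn1 2) leq_exp2l.
case: c c_gt0 le_cS => [|[|c]] //= _ le_cS le2X.
  have : S + 2 <= 5 by lia.
  by move=> le5; have := leq_mul le5 le5; rewrite -mulnn; lia.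
move: le2X le_cS; set X := 2 ^ c.+2 => le2X le_cS.
(* Squaring 2 (S + 2) <= 5 X leaves room since 5^2 <= 4 * 8. *)
have le_2S : 2 * (S + 2) <= 5 * X by nia.
have := leq_mul le_2S le_2S; rewrite -mulnn; nia.
Qed.

Lemma sum_pred_exp2_bound (I : finType) (k : I -> nat) n n1 :
    \sum_i k i <= n -> (forall i, k i <= n1) ->
  let S := \sum_i (2 ^ k i - 1) in
  (S + 2) ^ 2 <= 2 ^ (n + 2) \/ S + 2 <= 2 ^ n1.+1.
Proof.
move=> sum_le k_le S.
have le_cS c : n1 <= c -> c * S <= n * (2 ^ c - 1).
  by move=> le_n1c; apply: sum_pred_exp2_le => // i; apply: leq_trans le_n1c.
have [n1_0 | n1_gt0] := posnP n1.
  right; suff -> : S = 0 by rewrite n1_0.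
  by apply: big1 => i _; move: (k_le i); rewrite n1_0 leqn0 => /eqP->.
have [le_n_2n1 | lt_2n1_n] := leqP n n1.*2.
  by right; apply: pred_exp2_bound_even n1_gt0 le_n_2n1 (le_cS _ (leqnn _)).
left; set c := n./2.
have n_eq : n = c.*2 + odd n by rewrite addnC odd_double_half.
have le_n1c : n1 <= c by lia.
have c_gt0 : 0 < c by apply: leq_trans le_n1c.
move: (le_cS c le_n1c); rewrite n_eq; case: (odd n) => [|] le_cS'.
  by rewrite addn1 in le_cS' *; apply: pred_exp2_bound_odd.
rewrite addn0 in le_cS' *.
have := pred_exp2_bound_even c_gt0 (leqnn _) le_cS'.
by rewrite -(leq_exp2r _ _ (ltn0Sn 1)) -expnM !addn2 muln2 doubleS.
Qed.

Lemma leq_card_bigcup (I T : finType) (F : I -> {set T}) :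
  #|\bigcup_i F i| <= \sum_i #|F i|.
Proof.
elim/big_ind2: _ => [|m1 X1 m2 X2 le1 le2|//]; first by rewrite cards0.
exact: leq_trans (leq_card_setU X1 X2).1 (leq_add le1 le2).
Qed.

Lemma card_bigcup_powerset (I T : finType) (F : I -> {set T}) :
  #|\bigcup_i powerset (F i)| <= (\sum_i (2 ^ #|F i| - 1)).+1.
Proof.
have sub : \bigcup_i powerset (F i)
    \subset set0 |: \bigcup_i (powerset (F i) :\ set0).
  apply/subsetP => X /bigcupP[i _ XsubF]; apply/setU1P.
  have [-> | X_neq0] := eqVneq X set0; [by left | right].
  by apply/bigcupP; exists i; rewrite // in_setD1 X_neq0.
apply: leq_trans (subset_leq_card sub) _; rewrite cardsU1 -add1n.
apply: leq_add; first exact: leq_b1.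
apply: leq_trans (leq_card_bigcup _) _; apply: leq_sum => i _.
have := cardsD1 set0 (powerset (F i)).
by rewrite card_powerset powersetE sub0set => ->; rewrite addKn.
Qed.

Section SubsetConstruction.
Variables (Sigma Q : finType) (A : nfa Sigma Q).

Definition nfa_step (X : {set Q}) (a : Sigma) : {set Q} :=
  \bigcup_(q in X) nfa_delta A q a.

Lemma nfa_step_sub_reach X a : nfa_step X a \subset reach_by A a.
Proof. by apply/bigcupsP => q _; apply: (bigcup_max q). Qed.

Lemma mem_foldl_nfa_step w X q :
  q \in foldl nfa_step X w <->
  exists p, exists qs, [/\ p \in X, nfa_run A p w qs & last p qs = q].
Proof.
elim: w X => [|a w IHw] X /=.
  split=> [Xq | [p [qs [pX + <-]]]]; first by exists q, [::].
  by case: qs.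
rewrite IHw; split=> [[p' [qs [/bigcupP[p pX p'_delta] run_p' <-]]] | ].
  by exists p, (p' :: qs); rewrite /= p'_delta.
move=> [p [[|p' qs] [pX //= /andP[p'_delta run_p'] <-]]].
by exists p', qs; split=> //; apply/bigcupP; exists p.
Qed.

Lemma nfa_acceptsE w :
  nfa_accepts A w <-> foldl nfa_step (nfa_init A) w :&: nfa_final A != set0.
Proof.
split=> [[p [qs [p_init run_p final_last]]] | /set0Pn[q /setIP[]]].
  apply/set0Pn; exists (last p qs); rewrite inE final_last andbT.
  by apply/mem_foldl_nfa_step; exists p, qs.
move=> /mem_foldl_nfa_step[p [qs [p_init run_p <-]]] final_last.
by exists p, qs.
Qed.

Lemma dfa_of_step_closed (R : {set {set Q}}) :
    nfa_init A \in R -> (forall X a, X \in R -> nfa_step X a \in R) ->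
  exists D : dfa Sigma #|R|, forall w, dfa_accepts D w <-> nfa_accepts A w.
Proof.
move=> R_init R_step.
pose D := DFA (enum_rank_in R_init (nfa_init A))
  (fun i a => enum_rank_in R_init (nfa_step (enum_val i) a))
  [set i | enum_val i :&: nfa_final A != set0].
have run_D w i :
    enum_val (foldl (dfa_step D) i w) = foldl nfa_step (enum_val i) w.
  elim: w i => [|a w IHw] i //=.
  by rewrite IHw /= enum_rankK_in // R_step // enum_valP.
by exists D => w; rewrite nfa_acceptsE /dfa_accepts inE run_D enum_rankK_in.
Qed.

End SubsetConstruction.

Section LastSymbol.
Variables (Sigma Q : finType) (A : nfa Sigma Q).

Lemma sum_card_reach_by :
  remembers_last_symbol A -> \sum_a #|reach_by A a| <= #|Q|.
Proof.
move=> [P [disjP coverP subP]].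
have -> : #|Q| = \sum_a #|P a|.
  rewrite -cardsT -coverP -sum1_card (partition_disjoint_bigcup _ _ disjP).
  by apply: eq_bigr => a _; rewrite sum1_card.
by apply: leq_sum => a _; apply/subset_leq_card/bigcupsP => q _; apply: subP.
Qed.

Definition reach_subsets : {set {set Q}} :=
  nfa_init A |: \bigcup_a powerset (reach_by A a).

Lemma nfa_step_in_reach_subsets X a : nfa_step A X a \in reach_subsets.
Proof.
apply/setU1P; right; apply/bigcupP; exists a => //.
by rewrite powersetE nfa_step_sub_reach.
Qed.

Lemma card_reach_subsets :
  #|reach_subsets| <= \sum_a (2 ^ #|reach_by A a| - 1) + 2.
Proof.
rewrite cardsU1 addn2 -add1n; apply: leq_add; first exact: leq_b1.
exact: card_bigcup_powerset.
Qed.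

End LastSymbol.

Theorem lemma2 (Sigma Q : finType) (A : nfa Sigma Q) :
  remembers_last_symbol A ->
  let n := #|Q| in
  let n1 := \max_(a : Sigma) #|reach_by A a| in
  exists m : nat, exists D : dfa Sigma m,
    ((m ^ 2 <= 2 ^ (n + 2)) \/ (m <= 2 ^ n1.+1)) /\
    (forall w : seq Sigma, dfa_accepts D w <-> nfa_accepts A w).
Proof.
move=> last_symbol n n1.
have [D accepts_D] := dfa_of_step_closed (setU11 _ _)
  (fun X a _ => nfa_step_in_reach_subsets A X a).
exists #|reach_subsets A|, D; split=> //.
have [bound | bound] := sum_pred_exp2_bound (sum_card_reach_by last_symbol)
  (@leq_bigmax _ (fun a => #|reach_by A a|)); [left | right].
  by apply: leq_trans bound; rewrite leq_exp2r // card_reach_subsets.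
exact: leq_trans (card_reach_subsets A) bound.
Qed.
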